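(* Let $A,B,E,C$ define the stochastic system $X_{k+1}=AX_k+BU_k+EW_k$, $Y_k=CX_k$, with i.i.d. disturbances $W_k\in\mathcal L^2$ of known distribution, $(A,B)$ controllable, $(A,C)$ observable, and $T_{\mathrm{ini}}$ an integer not smaller than the lag of $(A,C)$. Assume it is equivalent to the VARX model $Y_k=\hat A\,Y_{[k-T_{\mathrm{ini}},k-1]}+\hat B\,U_{[k-T_{\mathrm{ini}},k-1]}+W_{k-1}$ with $\hat A\in\mathbb R^{n_y\times T_{\mathrm{ini}}n_y}$, $\hat B\in\mathbb R^{n_y\times T_{\mathrm{ini}}n_u}$, $W_k\in\mathcal L^2(\mathbb R^{n_y})$, and write $\mathbb E[W]$ for the common mean of the $W_k$. Let $(u^{\mathrm{ud}},y^{\mathrm{ud}})_{[1-T_{\mathrm{ini}},T]}$ be real data with $y^{\mathrm{ud}}_k=\hat A\,y^{\mathrm{ud}}_{[k-T_{\mathrm{ini}},k-1]}+\hat B\,u^{\mathrm{ud}}_{[k-T_{\mathrm{ini}},k-1]}$ for all $k\in\mathbb I_{[1,T]}$, and let $N\in\mathbb N^+$ satisfy $\operatorname{rank}\begin{bmatrix}\mathcal H_{T_{\mathrm{ini}}+N}(u^{\mathrm{ud}}_{[1,T]})\\ \mathcal H_{T_{\mathrm{ini}}}(y^{\mathrm{ud}}_{[1,T-N]})\end{bmatrix}=(T_{\mathrm{ini}}+N)n_u+T_{\mathrm{ini}}n_y$. Let $(\tilde u,\tilde y)_{[1-T_{\mathrm{ini}},0]}$ be a measured (deterministic) initial input-output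 trajectory. Define $y^w_1=\mathbb E[W]$ and $$y^w_{[2,N]}=\mathcal H_{N-1}(y^{\mathrm{ud}}_{[T_{\mathrm{ini}}+1,T]})\begin{bmatrix}\mathcal H_{T_{\mathrm{ini}}+N-1}(u^{\mathrm{ud}}_{[1,T]})\\ \mathcal H_{T_{\mathrm{ini}}-1}(y^{\mathrm{ud}}_{[1,T-N]})\\ \mathcal H_1(y^{\mathrm{ud}}_{[T_{\mathrm{ini}},T-N+1]})\end{bmatrix}^{\dagger}\begin{bmatrix}0_{(T_{\mathrm{ini}}+N-1)n_u\times1}\\ 0_{(T_{\mathrm{ini}}-1)n_y\times1}\\ \mathbb E[W]\end{bmatrix},$$ where $\dagger$ is the Moore–Penrose inverse. Then real sequences $(\mathsf u^0,\mathsf y^0)_{[1,N]}$ satisfy the zeroth PCE coefficient dynamics $$\mathsf y^0_k=\hat A\,\mathsf y^0_{[k-T_{\mathrm{ini}},k-1]}+\hat B\,\mathsf u^0_{[k-T_{\mathrm{ini}},k-1]}+\mathbb E[W],\ k\in\mathbb I_{[1,N]},\qquad (\mathsf u^0,\mathsf y^0)_{[1-T_{\mathrm{ini}},0]}=(\tilde u,\tilde y)_{[1-T_{\mathrm{ini}},0]},$$ if and only if there exists $\mathsf g^0\in\mathbb R^{T-N-T_{\mathrm{ini}}+1}$ such that $$\begin{bmatrix}\mathcal H_{T_{\mathrm{ini}}}(u^{\mathrm{ud}}_{[1,T-N]})\\ \mathcal H_{T_{\mathrm{ini}}}(y^{\mathrm{ud}}_{[1,T-N]})\\ \mathcal H_N(u^{\mathrm{ud}}_{[T_{\mathrm{ini}}+1,T]})\\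 \mathcal H_N(y^{\mathrm{ud}}_{[T_{\mathrm{ini}}+1,T]})\end{bmatrix}\mathsf g^0=\begin{bmatrix}\tilde u_{[1-T_{\mathrm{ini}},0]}\\ \tilde y_{[1-T_{\mathrm{ini}},0]}\\ \mathsf u^0_{[1,N]}\\ y^u_{[1,N]}\end{bmatrix},\qquad\text{where } y^u_k=\mathsf y^0_k-\sum_{i=1}^k y^w_i .$$
   Context: $\mathcal L^2(\mathbb R^n)$: $\mathbb R^n$-valued random variables with finite second moments. $\mathbb I_{[a,b]}=\{a,\dots,b\}$; $z_{[a,b]}=[z_a^\top,\dots,z_b^\top]^\top$. For $z_{[a,b]}$ with $z_k\in\mathbb R^n$ and $M\le b-a+1$, $\mathcal H_M(z_{[a,b]})$ is the $Mn\times(b-a-M+2)$ block Hankel matrix whose $(r,c)$ block is $z_{a+r+c-2}$. The lag of observable $(A,C)$ is the smallest $\ell$ with $[C^\top,\dots,(CA^{\ell-1})^\top]^\top$ of full column rank. In polynomial chaos expansion (PCE) with first basis function $\phi^0=1$, the zeroth PCE coefficient of a random variable is its mean; the zeroth coefficients of inputs/outputs obey the VARX dynamics with disturbance replaced by $\mathbb E[W]$ and, for a deterministic initial trajectory, initial condition equal to that trajectory. *)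

From HB Require Import structures.
From mathcomp Require Import all_boot all_order all_algebra.
Set Implicit Arguments. Unset Strict Implicit. Unset Printing Implicit Defensive.
Import Order.TTheory GRing.Theory Num.Theory.
Local Open Scope ring_scope.

(* Block Hankel matrix H_M(z_[a, a+M+L-2]) with L columns: the (r,c) block
   (0-based) is z_(a + r + c); blocks of size n are stacked row-major,
   i.e. row r*n + k of column c is the k-th entry of z_(a+r+c). *)
Definition hankel (R : ringType) (n M L : nat) (z : int -> 'cV[R]_n) (a : int)
  : 'M[R]_(M * n, L) :=
  \matrix_(i < M * n, c < L)
    (mxvec (\matrix_(r < M, k < n) z (a + r%:Z + c%:Z) k 0)) 0 i.

Definition seg (R : ringType) (n : nat) (z : int -> 'cV[R]_n) (a : int) (M : nat)
  : 'cV[R]_(M * n) :=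
  (mxvec (\matrix_(r < M, k < n) z (a + r%:Z) k 0))^T.

(* r-th block (0-based) of a stacked vector v = [v_0; ...; v_(M-1)] (0 if r >= M) *)
Definition blk (R : ringType) (n M : nat) (v : 'cV[R]_(M * n)) (r : nat) : 'cV[R]_n :=
  \col_(k < n) (if (insub r : option 'I_M) is Some i then vec_mx v^T i k else 0).

Definition moore_penrose (R : comRingType) (m n : nat)
  (A : 'M[R]_(m, n)) (X : 'M[R]_(n, m)) : Prop :=
  [/\ A *m X *m A = A, X *m A *m X = X,
      (A *m X)^T = A *m X & (X *m A)^T = X *m A].

From HB Require Import structures.
From mathcomp Require Import all_boot all_order all_algebra.
From mathcomp Require Import zify.
Import Order.TTheory GRing.Theory Num.Theory.
Local Open Scope ring_scope.

(* By the Penrose identity A A^+ A = A, A^+ b solves A g = b whenever b lies in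
   the range of A, which the full row rank of the data Hankel matrix
   guarantees. Hence y^w is the response of the noise-free VARX model, from
   zero initial data and zero input, to an impulse E[W] at time 1, and its
   partial sums are the step response to the constant disturbance E[W].
   Subtracting them turns the mean dynamics into the noise-free VARX dynamics
   with the same input and initial trajectory. Those are characterised by the
   data Hankel matrices: combinations of time shifts of the data are again
   trajectories, full row rank lets such a combination match any input and
   initial trajectory, and a trajectory is determined by these. *)

Set Implicit Arguments. Unset Strict Implicit.

Section Segments.
Variables (R : comNzRingType) (n : nat).
Implicit Types (z : int -> 'cV[R]_n) (a : int) (M : nat).

Lemma seg_entry z a M (r : 'I_M) (k : 'I_n) :
  seg z a M (mxvec_index r k) 0 = z (a + r%:Z) k 0.
Proof. by rewrite /seg mxE mxvecE mxE. Qed.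

Lemma seg_eqP z z' a a' M :
  seg z a M = seg z' a' M <-> forall r : nat, (r < M)%N -> z (a + r%:Z) = z' (a' + r%:Z).
Proof.
split=> [E r rM | E].
  apply/matrixP => k j; rewrite ord1.
  by move/matrixP: E => /(_ (mxvec_index (Ordinal rM) k) 0); rewrite !seg_entry.
apply/matrixP => i j; rewrite ord1; case/mxvec_indexP: i => r k.
by rewrite !seg_entry E.
Qed.

Lemma blk_seg z a M r : (r < M)%N -> blk (seg z a M) r = z (a + r%:Z).
Proof.
move=> rM; apply/matrixP => k j; rewrite ord1 /blk /seg trmxK mxvecK !mxE.
by rewrite insubT /= mxE.
Qed.

Lemma seg0 a M : seg (fun _ => 0) a M = 0 :> 'cV[R]_(M * n).
Proof.
apply/matrixP => i j; rewrite ord1; case/mxvec_indexP: i => r k.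
by rewrite !(seg_entry, mxE).
Qed.

Lemma segD z z' a M : seg (fun t => z t + z' t) a M = seg z a M + seg z' a M.
Proof.
apply/matrixP => i j; rewrite ord1; case/mxvec_indexP: i => r k.
by rewrite !(seg_entry, mxE).
Qed.

Lemma segB z z' a M : seg (fun t => z t - z' t) a M = seg z a M - seg z' a M.
Proof.
apply/matrixP => i j; rewrite ord1; case/mxvec_indexP: i => r k.
by rewrite !(seg_entry, mxE).
Qed.

Lemma segZ (c : R) z a M : seg (fun t => c *: z t) a M = c *: seg z a M.
Proof.
apply/matrixP => i j; rewrite ord1; case/mxvec_indexP: i => r k.
by rewrite !(seg_entry, mxE).
Qed.

Lemma seg_sum L (F : 'I_L -> int -> 'cV[R]_n) a M :
  seg (fun t => \sum_(c < L) F c t) a M = \sum_(c < L) seg (F c) a M.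
Proof.
apply/matrixP => i j; rewrite summxE ord1; case/mxvec_indexP: i => r k.
by rewrite seg_entry summxE; apply: eq_bigr => c _; rewrite seg_entry.
Qed.

Lemma seg_shift z a d M : seg (fun t => z (t + d)) a M = seg z (a + d) M.
Proof. by apply/seg_eqP => r _; rewrite addrAC. Qed.

Definition hankel_comb L (g : 'cV[R]_L) z (t : int) : 'cV[R]_n :=
  \sum_(c < L) g c 0 *: z (t + c%:Z).

Lemma mul_hankel M L z a (g : 'cV[R]_L) :
  hankel M L z a *m g = seg (hankel_comb g z) a M.
Proof.
apply/matrixP => i j; rewrite ord1 !mxE; case/mxvec_indexP: i => r k.
rewrite mxvecE mxE summxE; apply: eq_bigr => c _.
by rewrite !mxE mxvecE mxE mulrC.
Qed.

Definition pad0 L (g : 'cV[R]_L) : 'cV[R]_L.+1 :=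
  \col_(c < L.+1) (if (insub (val c) : option 'I_L) is Some c' then g c' 0 else 0).

Lemma hankel_comb_pad0 L (g : 'cV[R]_L) z t : hankel_comb (pad0 g) z t = hankel_comb g z t.
Proof.
rewrite /hankel_comb big_ord_recr /= mxE insubF ?ltnn // scale0r addr0.
by apply: eq_bigr => c _; rewrite mxE /= valK.
Qed.

Definition paste (x x' : int -> 'cV[R]_n) (t : int) := if t <= 0 then x t else x' t.

Lemma seg_pasteP z x x' (P F : nat) :
  seg z 1 P = seg x (1 - P%:Z) P /\ seg z (P%:Z + 1) F = seg x' 1 F <->
  (forall t : int, 1 - P%:Z <= t <= F%:Z -> z (t + P%:Z) = paste x x' t).
Proof.
rewrite !seg_eqP /paste; split=> [[Ep Ef] t Ht | E].
  case: lerP => t0.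
    rewrite (_ : t + P%:Z = 1 + (absz (t + P%:Z - 1)%R)%:Z) ?Ep; try lia.
    by congr (x _); lia.
  rewrite (_ : t + P%:Z = P%:Z + 1 + (absz (t - 1)%R)%:Z) ?Ef; try lia.
  by congr (x' _); lia.
split=> r rM.
  rewrite (_ : 1 + r%:Z = (1 - P%:Z + r%:Z) + P%:Z) ?E ?ifT //; lia.
rewrite (_ : P%:Z + 1 + r%:Z = (1 + r%:Z) + P%:Z) ?E ?ifF //; lia.
Qed.

End Segments.

Section VARX.
Variables (R : comNzRingType) (nu ny Tini : nat).
Variables (Ahat : 'M[R]_(ny, Tini * ny)) (Bhat : 'M[R]_(ny, Tini * nu)).
Implicit Types (y : int -> 'cV[R]_ny) (u : int -> 'cV[R]_nu).

Definition varx y u (k : int) : 'cV[R]_ny :=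
  Ahat *m seg y (k - Tini%:Z) Tini + Bhat *m seg u (k - Tini%:Z) Tini.

Lemma varx_ext y y' u u' k :
  (forall t, k - Tini%:Z <= t < k -> y t = y' t) ->
  (forall t, k - Tini%:Z <= t < k -> u t = u' t) ->
  varx y u k = varx y' u' k.
Proof.
move=> Ey Eu; rewrite /varx; congr (_ + _); congr (_ *m _).
  by apply/seg_eqP => r rT; apply: Ey; lia.
by apply/seg_eqP => r rT; apply: Eu; lia.
Qed.

Lemma varx_shift y u d k :
  varx (fun t => y (t + d)) (fun t => u (t + d)) k = varx y u (k + d).
Proof. by rewrite /varx !seg_shift addrAC. Qed.

Lemma varxB y z u k :
  varx (fun t => y t - z t) u k = varx y u k - Ahat *m seg z (k - Tini%:Z) Tini.
Proof. by rewrite /varx segB mulmxBr addrAC. Qed.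

(* By linearity and time invariance of the recursion. *)
Lemma varx_hankel_comb T L yd ud (g : 'cV[R]_L) k :
  (forall k : int, 1 <= k <= T%:Z -> yd k = varx yd ud k) ->
  1 <= k -> k + L%:Z <= T%:Z + 1 ->
  hankel_comb g yd k = varx (hankel_comb g yd) (hankel_comb g ud) k.
Proof.
move=> Hd k1 kL; rewrite /hankel_comb /varx !seg_sum !mulmx_sumr -big_split /=.
apply: eq_bigr => c _; rewrite !segZ -!scalemxAr -scalerDr Hd; last first.
  by have := ltn_ord c; lia.
by rewrite -varx_shift /varx.
Qed.

Lemma varx_unique N y1 y2 u :
  (forall k : int, 1 <= k <= N%:Z -> y1 k = varx y1 u k) ->
  (forall k : int, 1 <= k <= N%:Z -> y2 k = varx y2 u k) ->
  (forall t : int, 1 - Tini%:Z <= t <= 0 -> y1 t = y2 t) ->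
  forall t : int, 1 - Tini%:Z <= t <= N%:Z -> y1 t = y2 t.
Proof.
move=> H1 H2 Hini.
suff E m t : 1 - Tini%:Z <= t <= N%:Z -> t <= m%:Z -> y1 t = y2 t.
  by move=> t Ht; apply: (E (absz t)) => //; lia.
elim: m t => [|m IH] t Ht tm; first by apply: Hini; lia.
have [|tm'] := boolP (t <= m%:Z); first exact: IH.
rewrite H1 ?H2; try lia.
by apply: varx_ext => s Hs //; apply: IH; lia.
Qed.

Lemma varx_forced_sub N y z u (e : 'cV[R]_ny) :
  (forall k : int, 1 <= k <= N%:Z -> z k = Ahat *m seg z (k - Tini%:Z) Tini + e) ->
  (forall k : int, 1 <= k <= N%:Z -> y k = varx y u k + e) <->
  (forall k : int, 1 <= k <= N%:Z ->
     y k - z k = varx (fun t => y t - z t) u k).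
Proof.
move=> Hz; have E k : 1 <= k <= N%:Z ->
    (y k - z k == varx (fun t => y t - z t) u k) = (y k == varx y u k + e).
  by move=> Hk; rewrite varxB Hz // subr_eq addrA subrK.
split=> H k Hk; apply/eqP; [rewrite E //| rewrite -E //]; exact/eqP/H.
Qed.
End VARX.

Section CumulativeSum.
Variables (R : comNzRingType) (n Tini : nat) (A : 'M[R]_(n, Tini * n)).
Implicit Type h : nat -> 'cV[R]_n.

Definition causal h (t : int) : 'cV[R]_n := if t <= 0 then 0 else h (absz t).

Definition cumsum h (t : int) : 'cV[R]_n :=
  if t <= 0 then 0 else \sum_(1 <= i < (absz t).+1) h i.

Lemma cumsum_rec h t : cumsum h t = cumsum h (t - 1) + causal h t.
Proof.
rewrite /cumsum /causal; case: (lerP t 0) => [t0 | t_gt0].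
  by rewrite ifT ?addr0 //; lia.
have [m ->] : exists m : nat, t = m.+1%:Z by exists (absz t).-1; lia.
rewrite (_ : m.+1%:Z - 1 = m%:Z) /=; last lia.
rewrite big_nat_recr //=; case: (lerP m%:Z 0) => [m0 | //].
by rewrite (_ : m = 0%N) ?big_geq ?add0r //; lia.
Qed.

Lemma cumsum_step_response N h (e : 'cV[R]_n) :
  h 1%N = e ->
  (forall j : int, 2 <= j <= N%:Z -> causal h j = A *m seg (causal h) (j - Tini%:Z) Tini) ->
  forall k : int, 1 <= k <= N%:Z -> cumsum h k = A *m seg (cumsum h) (k - Tini%:Z) Tini + e.
Proof.
move=> h1 Hh; suff E m : (m < N)%N ->
    cumsum h m.+1%:Z = A *m seg (cumsum h) (m.+1%:Z - Tini%:Z) Tini + e.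
  by move=> k Hk; rewrite (_ : k = (absz (k - 1)%R).+1%:Z); [apply: E|]; lia.
have cumsum_prev t : seg (cumsum h) (t - 1) Tini = seg (fun s => cumsum h (s - 1)) t Tini.
  by rewrite seg_shift.
elim: m => [|m IH] Hm.
  have -> : seg (cumsum h) (1 - Tini%:Z) Tini = 0.
    by rewrite -(seg0 _ _ (1 - Tini%:Z) Tini); apply/seg_eqP => r rT; rewrite /cumsum ifT //; lia.
  by rewrite cumsum_rec /causal /= h1 /cumsum /= add0r mulmx0 add0r.
rewrite cumsum_rec (_ : m.+2%:Z - 1 = m.+1%:Z) ?IH; try lia.
rewrite Hh; last lia.
rewrite (_ : m.+1%:Z - Tini%:Z = m.+2%:Z - Tini%:Z - 1) ?cumsum_prev; last lia.
have -> : seg (cumsum h) (m.+2%:Z - Tini%:Z) Tini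
    = seg (fun s => cumsum h (s - 1) + causal h s) (m.+2%:Z - Tini%:Z) Tini.
  by apply/seg_eqP => r _; rewrite -cumsum_rec.
by rewrite segD mulmxDr addrAC.
Qed.
End CumulativeSum.

Lemma col_mx_eqP (R : Type) m1 m2 n (A1 B1 : 'M[R]_(m1, n)) (A2 B2 : 'M[R]_(m2, n)) :
  col_mx A1 A2 = col_mx B1 B2 <-> A1 = B1 /\ A2 = B2.
Proof. by split=> [/eq_col_mx | [-> ->]]. Qed.

Lemma row_free_surj (F : fieldType) m n (A : 'M[F]_(m, n)) :
  row_free A -> forall v : 'cV[F]_m, exists x, A *m x = v.
Proof.
by move=> /row_freeP [B AB] v; exists (B *m v); rewrite mulmxA AB mul1mx.
Qed.

Lemma hankel_window_pasteP (R : comNzRingType) nu ny P F L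
    (uud ut u0 : int -> 'cV[R]_nu) (yud yt y0 : int -> 'cV[R]_ny) (g : 'cV[R]_L) :
  col_mx (hankel P L uud 1)
    (col_mx (hankel P L yud 1)
      (col_mx (hankel F L uud (P%:Z + 1)) (hankel F L yud (P%:Z + 1)))) *m g
  = col_mx (seg ut (1 - P%:Z) P)
      (col_mx (seg yt (1 - P%:Z) P) (col_mx (seg u0 1 F) (seg y0 1 F))) <->
  (forall t : int, 1 - P%:Z <= t <= F%:Z -> hankel_comb g uud (t + P%:Z) = paste ut u0 t) /\
  (forall t : int, 1 - P%:Z <= t <= F%:Z -> hankel_comb g yud (t + P%:Z) = paste yt y0 t).
Proof.
rewrite !mul_col_mx !mul_hankel !col_mx_eqP.
split=> [[Eu1 [Ey1 [Eu2 Ey2]]] | [/seg_pasteP [? ?] /seg_pasteP [? ?]] //].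
by split; apply/seg_pasteP.
Qed.

Section HankelData.
Variables (R : fieldType) (nu ny : nat).
Variables (uud : int -> 'cV[R]_nu) (yud : int -> 'cV[R]_ny).

Lemma hankel_interp L P Q (a : int) (u : int -> 'cV[R]_nu) (y : int -> 'cV[R]_ny) :
  row_free (col_mx (hankel P L uud 1) (hankel Q L yud 1)) ->
  exists g : 'cV[R]_L,
    (forall r : nat, (r < P)%N -> hankel_comb g uud (1 + r%:Z) = u (a + r%:Z)) /\
    (forall r : nat, (r < Q)%N -> hankel_comb g yud (1 + r%:Z) = y (a + r%:Z)).
Proof.
move=> /row_free_surj /(_ (col_mx (seg u a P) (seg y a Q))) [g].
by rewrite mul_col_mx !mul_hankel col_mx_eqP !seg_eqP; exists g.
Qed.

Lemma hankel_impulseP M1 M2 L (a : int) (g : 'cV[R]_L) (e : 'cV[R]_ny) :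
  col_mx (hankel M1 L uud 1) (col_mx (hankel M2 L yud 1) (hankel 1 L yud a)) *m g
    = col_mx 0 (col_mx 0 (seg (fun _ => e) 0 1)) <->
  [/\ forall r : nat, (r < M1)%N -> hankel_comb g uud (1 + r%:Z) = 0,
      forall r : nat, (r < M2)%N -> hankel_comb g yud (1 + r%:Z) = 0 &
      hankel_comb g yud a = e].
Proof.
rewrite !mul_col_mx !mul_hankel !col_mx_eqP -(seg0 _ _ 1 M1) -(seg0 _ _ 1 M2) !seg_eqP.
split=> [[Eu [Ey Ee]] | [Eu Ey Ee]].
  by split=> //; rewrite -[a]addr0; apply: Ee.
by do 2!split=> //; case=> [_ | //]; rewrite addr0.
Qed.

End HankelData.

Section DataDrivenVARX.
Variables (R : fieldType) (nu ny Tini N T : nat).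
Variables (Ahat : 'M[R]_(ny, Tini * ny)) (Bhat : 'M[R]_(ny, Tini * nu)).
Variables (uud : int -> 'cV[R]_nu) (yud : int -> 'cV[R]_ny).
Hypothesis Tini_gt0 : (0 < Tini)%N.
Hypothesis TiniN_le_T : (Tini + N <= T)%N.
Hypothesis data_traj :
  forall k : int, 1 <= k <= T%:Z -> yud k = varx Ahat Bhat yud uud k.
Local Notation L := (T - N - Tini + 1)%N.
Local Notation comb_traj g z := (fun t => hankel_comb g z (t + Tini%:Z)).

Lemma varx_hankelP (u : int -> 'cV[R]_nu) (y : int -> 'cV[R]_ny) :
  row_free (col_mx (hankel (Tini + N) L uud 1) (hankel Tini L yud 1)) ->
  (forall k : int, 1 <= k <= N%:Z -> y k = varx Ahat Bhat y u k) <->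
  exists g : 'cV[R]_L,
    (forall t : int, 1 - Tini%:Z <= t <= N%:Z -> hankel_comb g uud (t + Tini%:Z) = u t) /\
    (forall t : int, 1 - Tini%:Z <= t <= N%:Z -> hankel_comb g yud (t + Tini%:Z) = y t).
Proof.
move=> free.
have comb_varx (g : 'cV[R]_L) (k : int) : 1 <= k <= N%:Z ->
    hankel_comb g yud (k + Tini%:Z) = varx Ahat Bhat (comb_traj g yud) (comb_traj g uud) k.
  by move=> Hk; rewrite varx_shift; apply: varx_hankel_comb data_traj _ _; lia.
split=> [Hy | [g [Eu Ey]] k Hk]; last first.
  rewrite -Ey ?comb_varx; try lia.
  by apply: varx_ext => t Ht; [rewrite Ey // | rewrite Eu //]; lia.
have [g [Eu Ey]] := hankel_interp (1 - Tini%:Z) u y free.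
have Eu' t : 1 - Tini%:Z <= t <= N%:Z -> hankel_comb g uud (t + Tini%:Z) = u t.
  move=> Ht; rewrite (_ : t + Tini%:Z = 1 + (absz (t + Tini%:Z - 1)%R)%:Z) ?Eu; try lia.
  by congr (u _); lia.
exists g; split=> //; apply: (varx_unique (u := u) _ Hy) => [k Hk | t Ht].
  by rewrite comb_varx //; apply: varx_ext => t Ht //; apply: Eu'; lia.
rewrite (_ : t + Tini%:Z = 1 + (absz (t + Tini%:Z - 1)%R)%:Z) ?Ey; try lia.
by congr (y _); lia.
Qed.

Lemma moore_penrose_impulse (e : 'cV[R]_ny) Mdag :
  row_free (col_mx (hankel (Tini + N) L uud 1) (hankel Tini L yud 1)) ->
  moore_penrose (col_mx (hankel (Tini + N - 1) L.+1 uud 1)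
    (col_mx (hankel (Tini - 1) L.+1 yud 1) (hankel 1 L.+1 yud Tini%:Z))) Mdag ->
  let g := Mdag *m col_mx 0 (col_mx 0 (seg (fun _ => e) 0 1)) in
  [/\ forall r : nat, (r < Tini + N - 1)%N -> hankel_comb g uud (1 + r%:Z) = 0,
      forall r : nat, (r < Tini - 1)%N -> hankel_comb g yud (1 + r%:Z) = 0 &
      hankel_comb g yud Tini%:Z = e].
Proof.
move=> free [AXA _ _ _] g; apply/hankel_impulseP.
have [x [Eu Ey]] := hankel_interp 1 (fun _ => 0) (fun t => if t == Tini%:Z then e else 0) free.
have Ax : col_mx (hankel (Tini + N - 1) L.+1 uud 1)
    (col_mx (hankel (Tini - 1) L.+1 yud 1) (hankel 1 L.+1 yud Tini%:Z)) *m pad0 x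
    = col_mx 0 (col_mx 0 (seg (fun _ => e) 0 1)).
  apply/hankel_impulseP; split=> [r Hr | r Hr |]; rewrite hankel_comb_pad0.
  - by rewrite Eu //; lia.
  - by rewrite Ey /=; [case: eqP => // ? |]; lia.
  - rewrite [Tini%:Z](_ : _ = 1 + (Tini - 1)%N%:Z); last lia.
    by rewrite Ey /=; [case: eqP => // ? | ]; lia.
by rewrite /g -Ax !mulmxA AXA.
Qed.

Lemma impulse_response_rec (g : 'cV[R]_L.+1) (h : nat -> 'cV[R]_ny) :
  (forall r : nat, (r < Tini + N - 1)%N -> hankel_comb g uud (1 + r%:Z) = 0) ->
  (forall r : nat, (r < Tini - 1)%N -> hankel_comb g yud (1 + r%:Z) = 0) ->
  (forall i : nat, (1 <= i <= N)%N -> h i = hankel_comb g yud (Tini%:Z - 1 + i%:Z)) ->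
  forall j : int, 2 <= j <= N%:Z ->
    causal h j = Ahat *m seg (causal h) (j - Tini%:Z) Tini.
Proof.
move=> Eu Ey Eh.
have Ech t : 2 - Tini%:Z <= t <= N%:Z -> causal h t = hankel_comb g yud (Tini%:Z - 1 + t).
  move=> Ht; rewrite /causal; case: lerP => t0.
    by rewrite (_ : _ - 1 + t = 1 + (absz (Tini%:Z - 2 + t)%R)%:Z) ?Ey //; lia.
  by rewrite Eh; [congr (hankel_comb g yud _) | ]; lia.
move=> j Hj; rewrite Ech ?(varx_hankel_comb g data_traj); try lia.
rewrite /varx (_ : seg (hankel_comb g uud) _ _ = 0) ?mulmx0 ?addr0.
  by congr (_ *m _); apply/seg_eqP => r rT; rewrite Ech; [congr (hankel_comb g yud _) | ]; lia.
rewrite -(seg0 _ _ 1 Tini); apply/seg_eqP => r rT.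
by rewrite (_ : _ - _ + _ = 1 + (absz (j - 2 + r%:Z)%R)%:Z) ?Eu //; lia.
Qed.
End DataDrivenVARX.

Unset Implicit Arguments. Set Strict Implicit.

Theorem lemma3 (R : realFieldType) (nu ny Tini N T : nat)
  (Ahat : 'M[R]_(ny, Tini * ny)) (Bhat : 'M[R]_(ny, Tini * nu))
  (EW : 'cV[R]_ny)
  (uud : int -> 'cV[R]_nu) (yud : int -> 'cV[R]_ny)
  (ut : int -> 'cV[R]_nu) (yt : int -> 'cV[R]_ny)
  (Mdag : 'M[R]_((T - N - Tini + 1).+1,
                 (Tini + N - 1) * nu + ((Tini - 1) * ny + 1 * ny)))
  (u0 : int -> 'cV[R]_nu) (y0 : int -> 'cV[R]_ny) :
  (0 < Tini)%N -> (0 < N)%N -> (Tini + N <= T)%N ->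
  (forall k : int, 1 <= k <= T%:Z ->
     yud k = Ahat *m seg yud (k - Tini%:Z) Tini + Bhat *m seg uud (k - Tini%:Z) Tini) ->
  \rank (col_mx (hankel (Tini + N) (T - N - Tini + 1) uud 1)
                (hankel Tini (T - N - Tini + 1) yud 1))
    = ((Tini + N) * nu + Tini * ny)%N ->
  moore_penrose
    (col_mx (hankel (Tini + N - 1) (T - N - Tini + 1).+1 uud 1)
      (col_mx (hankel (Tini - 1) (T - N - Tini + 1).+1 yud 1)
              (hankel 1 (T - N - Tini + 1).+1 yud Tini%:Z))) Mdag ->
  let ywt : 'cV[R]_((N - 1) * ny) :=
    hankel (N - 1) (T - N - Tini + 1).+1 yud (Tini%:Z + 1) *m Mdag
      *m col_mx 0 (col_mx 0 (seg (fun _ => EW) 0 1)) in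
  let yw (i : nat) : 'cV[R]_ny :=
    if i == 1%N then EW else blk ywt (i - 2) in
  let u0e (k : int) := if k <= 0 then ut k else u0 k in
  let y0e (k : int) := if k <= 0 then yt k else y0 k in
  let yu (k : int) := y0 k - \sum_(1 <= i < (absz k).+1) yw i in
  (forall k : int, 1 <= k <= N%:Z ->
     y0 k = Ahat *m seg y0e (k - Tini%:Z) Tini + Bhat *m seg u0e (k - Tini%:Z) Tini + EW)
  <->
  (exists g : 'cV[R]_(T - N - Tini + 1),
     col_mx (hankel Tini (T - N - Tini + 1) uud 1)
       (col_mx (hankel Tini (T - N - Tini + 1) yud 1)
         (col_mx (hankel N (T - N - Tini + 1) uud (Tini%:Z + 1))
                 (hankel N (T - N - Tini + 1) yud (Tini%:Z + 1)))) *m g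
     = col_mx (seg ut (1 - Tini%:Z) Tini)
         (col_mx (seg yt (1 - Tini%:Z) Tini)
           (col_mx (seg u0 1 N) (seg yu 1 N)))).
Proof.
move=> Tini_gt0 _ TiniN_le_T Hud Hrank Hmp ywt yw u0e y0e yu.
have free : row_free (col_mx (hankel (Tini + N) (T - N - Tini + 1) uud 1)
                             (hankel Tini (T - N - Tini + 1) yud 1)).
  by rewrite /row_free Hrank.
have [imp_u imp_y imp_e] := moore_penrose_impulse Tini_gt0 TiniN_le_T EW free Hmp.
have yw_comb i : (1 <= i <= N)%N -> yw i =
    hankel_comb (Mdag *m col_mx 0 (col_mx 0 (seg (fun _ => EW) 0 1))) yud (Tini%:Z - 1 + i%:Z).
  move=> Hi; rewrite /yw; case: eqP => [-> | i1].
    by rewrite (_ : Tini%:Z - 1 + _ = Tini%:Z) ?imp_e //; lia.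
  by rewrite /ywt -mulmxA mul_hankel blk_seg; [congr (hankel_comb _ yud _) | ]; lia.
have step := cumsum_step_response (h := yw) erefl
  (impulse_response_rec Tini_gt0 TiniN_le_T Hud imp_u imp_y yw_comb).
have y0E (k : int) : 1 <= k -> y0e k = y0 k by move=> k1; rewrite /y0e ifF //; lia.
have yuE t : y0e t - cumsum yw t = paste yt yu t.
  by rewrite /y0e /cumsum /paste /yu; case: ifP; rewrite ?subr0.
transitivity (forall k : int, 1 <= k <= N%:Z -> y0e k = varx Ahat Bhat y0e u0e k + EW).
  by split=> H k Hk; [rewrite y0E | rewrite -y0E]; try exact: H; lia.
rewrite (varx_forced_sub Bhat y0e u0e step).
transitivity (forall k : int, 1 <= k <= N%:Z ->
    paste yt yu k = varx Ahat Bhat (paste yt yu) (paste ut u0) k).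
  have Ev k : varx Ahat Bhat (fun t => y0e t - cumsum yw t) u0e k
              = varx Ahat Bhat (paste yt yu) (paste ut u0) k.
    by apply: varx_ext => t _.
  by split=> H k Hk; have := H k Hk; rewrite yuE Ev.
rewrite (varx_hankelP Tini_gt0 TiniN_le_T Hud _ _ free).
by split=> -[g /hankel_window_pasteP Eg]; exists g.
Qed.
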